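(* Let $V$ be a space. The following are equivalent: (i) $V$ is homothetic to $\overline{V}$; (ii) $V$ is homothetic to $\langle 1,\tau\rangle_{\mathbb{Q}}$ for some $\tau$ with $|\tau|^2\in\mathbb{Q}$.
   Context: A space is a $2$-dimensional $\mathbb{Q}$-vector subspace $V\subset\mathbb{C}$ containing two $\mathbb{R}$-linearly independent vectors; $\langle 1,\tau\rangle_{\mathbb{Q}}=\mathbb{Q}+\mathbb{Q}\tau$. Spaces $V_1,V_2$ are homothetic if $V_2=\lambda V_1$ for some $\lambda\in\mathbb{C}^*$. $\overline{V}$ is the complex conjugate of $V$. *)

From Stdlib Require Import Reals QArith Qreals.
From Coquelicot Require Import Coquelicot.

Open Scope C_scope.

Definition QtoC (q : Q) : C := RtoC (Q2R q).

Definition is_rat (x : R) : Prop := exists q : Q, x = Q2R q.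

Definition Qspan2 (a b : C) : C -> Prop :=
  fun z => exists p q : Q, z = QtoC p * a + QtoC q * b.

Definition Q_lin_indep2 (a b : C) : Prop :=
  forall p q : Q, QtoC p * a + QtoC q * b = 0 -> Q2R p = 0%R /\ Q2R q = 0%R.

Definition R_lin_indep2 (a b : C) : Prop :=
  forall r s : R, RtoC r * a + RtoC s * b = 0 -> r = 0%R /\ s = 0%R.

Definition Q_subspace_dim2 (V : C -> Prop) : Prop :=
  exists a b : C, Q_lin_indep2 a b /\ (forall z, V z <-> Qspan2 a b z).

Definition is_space (V : C -> Prop) : Prop :=
  Q_subspace_dim2 V /\ exists u v : C, V u /\ V v /\ R_lin_indep2 u v.

Definition homothetic (V1 V2 : C -> Prop) : Prop :=
  exists lam : C, lam <> 0 /\ (forall z, V2 z <-> exists w, V1 w /\ z = lam * w).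

Definition conj_set (V : C -> Prop) : C -> Prop := fun z => V (Cconj z).

From Stdlib Require Import Reals QArith Qreals Lra.
From Coquelicot Require Import Coquelicot.

(* Homothety is an equivalence relation compatible with conjugation, so both
   conditions depend only on the homothety class of V, and every space is
   homothetic to some <1, t> with t not real.  If |tau|^2 = r is rational and
   nonzero, then conj tau * <1, tau> = <conj tau, r> = <1, conj tau>.
   Conversely, <1, conj t> = lam <1, t> yields rationals with
   conj t (p + q t) = r + s t; imaginary parts give s = -p, hence
   q |t|^2 + 2 p Re t = r.  If q <> 0, then tau = p + q t satisfies
   <1, tau> = <1, t> and |tau|^2 = p^2 + q r.  If q = 0, then Re t is rational,
   so u = 1 + i Im t and conj u span <1, t>, which is therefore homothetic to
   <1, conj u / u>, and |conj u / u| = 1. *)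

Open Scope C_scope.

Lemma Q2R_eq0 (p : Q) : Q2R p = 0%R <-> p == 0.
Proof.
  split; intro H.
  - apply eqR_Qeq; rewrite H; symmetry; exact RMicromega.Q2R_0.
  - rewrite (Qeq_eqR _ _ H); exact RMicromega.Q2R_0.
Qed.

Lemma QtoC_0 : QtoC 0 = 0.
Proof. unfold QtoC; now rewrite RMicromega.Q2R_0. Qed.

Lemma QtoC_1 : QtoC 1 = 1.
Proof. unfold QtoC; now rewrite RMicromega.Q2R_1. Qed.

Lemma QtoC_opp (p : Q) : QtoC (- p) = - QtoC p.
Proof. unfold QtoC; rewrite Q2R_opp; apply RtoC_opp. Qed.

Lemma QtoC_plus (p q : Q) : QtoC (p + q) = QtoC p + QtoC q.
Proof. unfold QtoC; rewrite Q2R_plus; apply RtoC_plus. Qed.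

Lemma QtoC_minus (p q : Q) : QtoC (p - q) = QtoC p - QtoC q.
Proof. unfold QtoC; rewrite Q2R_minus; apply RtoC_minus. Qed.

Lemma QtoC_mult (p q : Q) : QtoC (p * q) = QtoC p * QtoC q.
Proof. unfold QtoC; rewrite Q2R_mult; apply RtoC_mult. Qed.

Lemma QtoC_neq0 (p : Q) : Q2R p <> 0%R -> QtoC p <> 0.
Proof. intros Hp E; apply Hp; now injection E. Qed.

Lemma QtoC_div (p q : Q) : Q2R q <> 0%R -> QtoC (p / q) = QtoC p / QtoC q.
Proof.
  intro Hq; unfold QtoC.
  rewrite Q2R_div by (rewrite <- Q2R_eq0; exact Hq).
  now apply RtoC_div.
Qed.

Lemma Cconj_QtoC (p : Q) : Cconj (QtoC p) = QtoC p.
Proof. unfold QtoC, RtoC, Cconj; simpl; f_equal; lra. Qed.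

Lemma Cconj_1 : Cconj 1 = 1.
Proof. unfold Cconj, RtoC; simpl; f_equal; lra. Qed.

Lemma Cconj_neq0 (z : C) : z <> 0 -> Cconj z <> 0.
Proof.
  intros Hz E; apply Hz.
  rewrite <- (Cconj_conj z), E; unfold Cconj, RtoC; simpl; f_equal; lra.
Qed.

Lemma Cinv_neq0 (z : C) : z <> 0 -> / z <> 0.
Proof. intros Hz E; apply C1_nz; rewrite <- (Cinv_r z), E by exact Hz; ring. Qed.

Lemma Qspan2_l (a b : C) : Qspan2 a b a.
Proof. exists 1%Q, 0%Q; rewrite QtoC_1, QtoC_0; ring. Qed.

Lemma Qspan2_r (a b : C) : Qspan2 a b b.
Proof. exists 0%Q, 1%Q; rewrite QtoC_1, QtoC_0; ring. Qed.

Lemma Qspan2_sub (a b u v z : C) :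
  Qspan2 a b u -> Qspan2 a b v -> Qspan2 u v z -> Qspan2 a b z.
Proof.
  intros [p1 [q1 ->]] [p2 [q2 ->]] [p [q ->]].
  exists (p * p1 + q * p2)%Q, (p * q1 + q * q2)%Q.
  rewrite !QtoC_plus, !QtoC_mult; ring.
Qed.

Lemma Qspan2_change_basis (a b u v : C) (p q r s : Q) :
  (Q2R p * Q2R s - Q2R q * Q2R r <> 0)%R ->
  u = QtoC p * a + QtoC q * b -> v = QtoC r * a + QtoC s * b ->
  forall z, Qspan2 u v z <-> Qspan2 a b z.
Proof.
  intros Hdet Hu Hv.
  set (d := (p * s - q * r)%Q).
  assert (Hd : Q2R d <> 0%R) by (unfold d; now rewrite Q2R_minus, !Q2R_mult).
  assert (HdC : QtoC d = QtoC p * QtoC s - QtoC q * QtoC r)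
    by (unfold d; now rewrite QtoC_minus, !QtoC_mult).
  pose proof (QtoC_neq0 d Hd) as HdC0; rewrite HdC in HdC0.
  intro z; split; apply Qspan2_sub.
  - exists p, q; exact Hu.
  - exists r, s; exact Hv.
  - exists (s / d)%Q, (- q / d)%Q.
    rewrite !QtoC_div, QtoC_opp, HdC, Hu, Hv by exact Hd.
    field; exact HdC0.
  - exists (- r / d)%Q, (p / d)%Q.
    rewrite !QtoC_div, QtoC_opp, HdC, Hu, Hv by exact Hd.
    field; exact HdC0.
Qed.

Lemma Qspan2_conj (a b z : C) :
  conj_set (Qspan2 a b) z <-> Qspan2 (Cconj a) (Cconj b) z.
Proof.
  unfold conj_set; split; intros [p [q E]]; exists p, q.
  - rewrite <- (Cconj_conj z), E, Cplus_conj, !Cmult_conj, !Cconj_QtoC.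
    reflexivity.
  - rewrite E, Cplus_conj, !Cmult_conj, !Cconj_QtoC, !Cconj_conj.
    reflexivity.
Qed.

Lemma Qspan2_real (a b z : C) :
  Im a = 0%R -> Im b = 0%R -> Qspan2 a b z -> Im z = 0%R.
Proof.
  destruct a as [a1 a2], b as [b1 b2]; simpl.
  intros -> -> [p [q ->]]; unfold QtoC; simpl; ring.
Qed.

Lemma homothetic_of_eq (V W : C -> Prop) :
  (forall z, V z <-> W z) -> homothetic V W.
Proof.
  intro H; exists 1; split; [exact C1_nz |].
  intro z; split.
  - intro Hz; exists z; split; [now apply H | ring].
  - intros [w [Hw ->]]; rewrite Cmult_1_l; now apply H.
Qed.

Lemma homothetic_sym (V W : C -> Prop) : homothetic V W -> homothetic W V.
Proof.
  intros [lam [Hlam H]]; exists (/ lam); split.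
  - now apply Cinv_neq0.
  - intro z; split.
    + intro Hz; exists (lam * z); split.
      * apply H; now exists z.
      * field; exact Hlam.
    + intros [w [Hw ->]].
      destruct (proj1 (H w) Hw) as [v [Hv ->]].
      replace (/ lam * (lam * v)) with v by (field; exact Hlam); exact Hv.
Qed.

Lemma homothetic_trans (U V W : C -> Prop) :
  homothetic U V -> homothetic V W -> homothetic U W.
Proof.
  intros [lam [Hlam HUV]] [mu [Hmu HVW]]; exists (mu * lam); split.
  - now apply Cmult_neq_0.
  - intro z; rewrite HVW; split.
    + intros [v [Hv ->]]; destruct (proj1 (HUV v) Hv) as [u [Hu ->]].
      exists u; split; [exact Hu | ring].
    + intros [u [Hu ->]]; exists (lam * u); split.
      * apply HUV; now exists u.
      * ring.
Qed.

Lemma homothetic_conj_set (V W : C -> Prop) :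
  homothetic V W -> homothetic (conj_set V) (conj_set W).
Proof.
  intros [lam [Hlam H]]; exists (Cconj lam); split.
  - now apply Cconj_neq0.
  - intro z; unfold conj_set; rewrite H; split.
    + intros [w [Hw E]]; exists (Cconj w); split.
      * now rewrite Cconj_conj.
      * now rewrite <- Cmult_conj, <- E, Cconj_conj.
    + intros [w [Hw ->]]; exists (Cconj w); split.
      * exact Hw.
      * now rewrite Cmult_conj, Cconj_conj.
Qed.

Lemma homothetic_conj_iff (V W : C -> Prop) :
  homothetic V W ->
  homothetic V (conj_set V) <-> homothetic W (conj_set W).
Proof.
  assert (Hdir : forall V1 V2, homothetic V1 V2 ->
            homothetic V1 (conj_set V1) -> homothetic V2 (conj_set V2)).
  { intros V1 V2 HVW HV.
    apply (homothetic_trans _ _ _ (homothetic_sym _ _ HVW)).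
    apply (homothetic_trans _ _ _ HV).
    now apply homothetic_conj_set. }
  intro HVW; split; apply Hdir; [exact HVW | now apply homothetic_sym].
Qed.

Lemma homothetic_Qspan2 (lam a b a' b' : C) :
  lam <> 0 -> a' = lam * a -> b' = lam * b ->
  homothetic (Qspan2 a b) (Qspan2 a' b').
Proof.
  intros Hlam -> ->; exists lam; split; [exact Hlam |].
  intro z; split.
  - intros [p [q ->]]; exists (QtoC p * a + QtoC q * b); split.
    + now exists p, q.
    + ring.
  - intros [w [[p [q ->]] ->]]; exists p, q; ring.
Qed.

Definition has_R_basis (V : C -> Prop) : Prop :=
  exists u v : C, V u /\ V v /\ R_lin_indep2 u v.

Lemma R_lin_indep2_scale (lam u v : C) :
  lam <> 0 -> R_lin_indep2 u v -> R_lin_indep2 (lam * u) (lam * v).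
Proof.
  intros Hlam H r s E; apply H.
  replace (RtoC r * u + RtoC s * v)
    with (/ lam * (RtoC r * (lam * u) + RtoC s * (lam * v))) by (field; exact Hlam).
  rewrite E; ring.
Qed.

Lemma has_R_basis_homothetic (V W : C -> Prop) :
  homothetic V W -> has_R_basis V -> has_R_basis W.
Proof.
  intros [lam [Hlam H]] [u [v [Hu [Hv Huv]]]].
  exists (lam * u), (lam * v); split; [| split].
  - apply H; now exists u.
  - apply H; now exists v.
  - now apply R_lin_indep2_scale.
Qed.

Lemma not_R_lin_indep2_real (u v : C) :
  Im u = 0%R -> Im v = 0%R -> ~ R_lin_indep2 u v.
Proof.
  destruct u as [u1 u2], v as [v1 v2]; simpl; intros -> -> H.
  destruct (H v1 (- u1)%R) as [Hv1 Hu1].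
  { unfold RtoC, Cmult, Cplus; simpl; f_equal; ring. }
  replace u1 with 0%R in * by lra; subst; destruct (H 1%R 0%R) as [H10 _].
  - unfold RtoC, Cmult, Cplus; simpl; f_equal; ring.
  - exact (R1_neq_R0 H10).
Qed.

Lemma has_R_basis_Qspan2_1 (tau : C) :
  has_R_basis (Qspan2 1 tau) -> Im tau <> 0%R.
Proof.
  intros [u [v [Hu [Hv Huv]]]] Htau.
  apply (not_R_lin_indep2_real u v); [| | exact Huv].
  - exact (Qspan2_real 1 tau u eq_refl Htau Hu).
  - exact (Qspan2_real 1 tau v eq_refl Htau Hv).
Qed.

Lemma space_homothetic_Qspan2_1_Im_neq0 (V : C -> Prop) (tau : C) :
  is_space V -> homothetic V (Qspan2 1 tau) -> Im tau <> 0%R.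
Proof.
  intros [_ HV] H; apply has_R_basis_Qspan2_1.
  exact (has_R_basis_homothetic _ _ H HV).
Qed.

Lemma space_homothetic_Qspan2_1 (V : C -> Prop) :
  is_space V -> exists t : C, homothetic V (Qspan2 1 t).
Proof.
  intros [[a [b [Hind HV]]] _].
  assert (Ha : a <> 0).
  { intro E; destruct (Hind 1%Q 0%Q) as [H1 _].
    - rewrite E, QtoC_0; ring.
    - rewrite RMicromega.Q2R_1 in H1; exact (R1_neq_R0 H1). }
  exists (b / a).
  apply (homothetic_trans _ (Qspan2 a b)); [now apply homothetic_of_eq |].
  apply (homothetic_Qspan2 (/ a)).
  - now apply Cinv_neq0.
  - field; exact Ha.
  - field; exact Ha.
Qed.

Lemma Qspan2_1_homothetic_conj (tau : C) :
  tau <> 0 -> is_rat (Cmod tau ^ 2) ->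
  homothetic (Qspan2 1 tau) (conj_set (Qspan2 1 tau)).
Proof.
  intros Htau [r Hr].
  assert (Hr0 : Q2R r <> 0%R).
  { rewrite <- Hr; apply pow_nonzero; apply Cmod_gt_0 in Htau; lra. }
  apply (homothetic_trans _ (Qspan2 (Cconj tau) (QtoC r))).
  - apply homothetic_Qspan2 with (lam := Cconj tau).
    + now apply Cconj_neq0.
    + ring.
    + unfold QtoC; rewrite <- Hr, Cmod2_conj; ring.
  - apply homothetic_of_eq; intro z; rewrite Qspan2_conj, Cconj_1.
    apply Qspan2_change_basis with (p := 0%Q) (q := 1%Q) (r := r) (s := 0%Q).
    + rewrite RMicromega.Q2R_0, RMicromega.Q2R_1; lra.
    + rewrite QtoC_0, QtoC_1; ring.
    + rewrite QtoC_0; ring.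
Qed.

Lemma homothetic_conj_Qspan2_1_circle (t : C) :
  Im t <> 0%R -> homothetic (Qspan2 1 t) (conj_set (Qspan2 1 t)) ->
  exists p q r : Q, (Q2R p <> 0%R \/ Q2R q <> 0%R) /\
    (Q2R q * Cmod t ^ 2 + 2 * Q2R p * Re t)%R = Q2R r.
Proof.
  intros Ht [lam [Hlam H]].
  destruct (proj1 (H 1)) as [w1 [[p [q Hw1]] E1]].
  { unfold conj_set; rewrite Cconj_1; apply Qspan2_l. }
  destruct (proj1 (H (Cconj t))) as [w2 [[r [s Hw2]] E2]].
  { unfold conj_set; rewrite Cconj_conj; apply Qspan2_r. }
  assert (Hrel : Cconj t * w1 = w2).
  { rewrite E2; transitivity (w2 * (lam * w1)); [ring | rewrite <- E1; ring]. }
  exists p, q, r; split.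
  - destruct (Req_dec (Q2R p) 0) as [Hp | Hp]; [| now left].
    destruct (Req_dec (Q2R q) 0) as [Hq | Hq]; [| now right].
    exfalso; apply C1_nz.
    rewrite E1, Hw1; unfold QtoC; rewrite Hp, Hq; ring.
  - rewrite Hw1, Hw2 in Hrel; rewrite Cmod2_alt.
    destruct t as [x y].
    pose proof (f_equal fst Hrel) as Hre; pose proof (f_equal snd Hrel) as Him.
    unfold QtoC, Cconj, Cmult, Cplus, RtoC in Hre, Him; simpl in Hre, Him, Ht |- *.
    assert (Hs : Q2R s = (- Q2R p)%R).
    { apply Rmult_eq_reg_r with y; [lra | exact Ht]. }
    rewrite Hs in Hre; nra.
Qed.

Lemma Qspan2_1_rat_norm_of_circle (t : C) (p q r : Q) :
  Q2R q <> 0%R -> (Q2R q * Cmod t ^ 2 + 2 * Q2R p * Re t)%R = Q2R r ->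
  exists tau : C, is_rat (Cmod tau ^ 2) /\ homothetic (Qspan2 1 t) (Qspan2 1 tau).
Proof.
  intros Hq Hrel; exists (QtoC p + QtoC q * t); split.
  - exists (p * p + q * r)%Q.
    rewrite Q2R_plus, !Q2R_mult, <- Hrel, !Cmod2_alt.
    destruct t as [x y]; unfold QtoC, RtoC; simpl; ring.
  - apply homothetic_of_eq; intro z; symmetry.
    apply Qspan2_change_basis with (p := 1%Q) (q := 0%Q) (r := p) (s := q).
    + rewrite RMicromega.Q2R_0, RMicromega.Q2R_1; lra.
    + rewrite QtoC_1, QtoC_0; ring.
    + ring.
Qed.

Lemma Qspan2_1_rat_norm_of_rational_Re (t : C) (rho : Q) :
  Re t = Q2R rho ->
  exists tau : C, is_rat (Cmod tau ^ 2) /\ homothetic (Qspan2 1 t) (Qspan2 1 tau).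
Proof.
  intro Hre.
  (* u = 1 + i Im t *)
  set (u := QtoC (1 - rho) + t).
  assert (Hconj : Cconj u = QtoC (1 + rho) - t).
  { unfold u; destruct t as [x y]; simpl in Hre.
    unfold QtoC, RtoC, Cconj, Cminus, Copp, Cplus; simpl.
    rewrite Q2R_minus, Q2R_plus, RMicromega.Q2R_1; f_equal; lra. }
  assert (Hu : u <> 0).
  { intro E; apply (f_equal Re) in E; revert E.
    unfold u; destruct t as [x y]; simpl in Hre.
    unfold QtoC, RtoC, Cplus; simpl.
    rewrite Q2R_minus, RMicromega.Q2R_1; lra. }
  exists (Cconj u / u); split.
  - exists 1%Q; rewrite RMicromega.Q2R_1, Cmod_div, Cmod_conj by exact Hu.
    apply Cmod_gt_0 in Hu; field; lra.
  - apply (homothetic_trans _ (Qspan2 u (Cconj u))).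
    + apply homothetic_of_eq; intro z; symmetry.
      apply Qspan2_change_basis
        with (p := (1 - rho)%Q) (q := 1%Q) (r := (1 + rho)%Q) (s := Qopp 1).
      * rewrite Q2R_minus, Q2R_plus, Q2R_opp, RMicromega.Q2R_1; lra.
      * rewrite QtoC_1; unfold u; ring.
      * rewrite Hconj, QtoC_opp, QtoC_1; ring.
    + apply (homothetic_Qspan2 (/ u)).
      * now apply Cinv_neq0.
      * field; exact Hu.
      * field; exact Hu.
Qed.

Lemma homothetic_conj_Qspan2_1_rat_norm (t : C) :
  Im t <> 0%R -> homothetic (Qspan2 1 t) (conj_set (Qspan2 1 t)) ->
  exists tau : C, is_rat (Cmod tau ^ 2) /\ homothetic (Qspan2 1 t) (Qspan2 1 tau).
Proof.
  intros Ht Hconj.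
  destruct (homothetic_conj_Qspan2_1_circle t Ht Hconj) as [p [q [r [Hpq Hrel]]]].
  destruct (Req_dec (Q2R q) 0) as [Hq | Hq].
  - assert (Hp : Q2R p <> 0%R) by (destruct Hpq; [assumption | contradiction]).
    apply (Qspan2_1_rat_norm_of_rational_Re t (r / (p + p))).
    rewrite Q2R_div, Q2R_plus by (rewrite <- Q2R_eq0, Q2R_plus; lra).
    rewrite <- Hrel, Hq; field; lra.
  - exact (Qspan2_1_rat_norm_of_circle t p q r Hq Hrel).
Qed.

Theorem lemma4p4 (V : C -> Prop) (HV : is_space V) :
  homothetic V (conj_set V) <->
  exists tau : C, is_rat (Cmod tau ^ 2) /\ homothetic V (Qspan2 (RtoC 1) tau).
Proof.
  destruct (space_homothetic_Qspan2_1 V HV) as [t Ht].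
  pose proof (space_homothetic_Qspan2_1_Im_neq0 V t HV Ht) as Ht_Im.
  rewrite (homothetic_conj_iff _ _ Ht); split.
  - intro Hconj.
    destruct (homothetic_conj_Qspan2_1_rat_norm t Ht_Im Hconj) as [tau [Hr Htau]].
    exists tau; split; [exact Hr | exact (homothetic_trans _ _ _ Ht Htau)].
  - intros [tau [Hr Htau]].
    apply (homothetic_conj_iff _ _ (homothetic_trans _ _ _ (homothetic_sym _ _ Ht) Htau)).
    apply Qspan2_1_homothetic_conj; [| exact Hr].
    intro E; apply (space_homothetic_Qspan2_1_Im_neq0 V tau HV Htau); rewrite E; reflexivity.
Qed.
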